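(* Let $M$ be a smooth manifold with a symmetric affine connection $\nabla$, Riemann tensor $R_{abc}{}^d$ and Ricci tensor $R_{ab}$. Then $$\nabla_a\nabla_m R_{bec}{}^m - \nabla_b\nabla_mR_{ace}{}^m + \nabla_c\nabla_m R_{eba}{}^m - \nabla_e\nabla_m R_{cab}{}^m = R_{am} R_{bec}{}^m - R_{bm}R_{ace}{}^m + R_{cm} R_{eba}{}^m -R_{em} R_{cab}{}^m .$$
   Context: Abstract index notation with Einstein summation. The connection has symmetric Christoffel symbols $\Gamma^c_{ab}$; $R_{abc}{}^d = \partial_a \Gamma_{bc}^d - \partial_b\Gamma_{ac}^d - \Gamma_{ac}^k\Gamma_{bk}^d + \Gamma_{ak}^d \Gamma_{bc}^k$ and $R_{ac}=R_{abc}{}^b$. *)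

From HB Require Import structures.
From mathcomp Require Import all_boot all_order all_algebra.
Set Implicit Arguments. Unset Strict Implicit. Unset Printing Implicit Defensive.
Import GRing.Theory.
Local Open Scope ring_scope.

(* R : ring of (smooth) functions on a coordinate chart, n = dimension,
   d a : R -> R  the coordinate partial derivative  ∂_a,
   G c a b = Γ^c_{ab}  (Christoffel symbols).  *)

Definition Riem (R : comNzRingType) (n : nat) (d : 'I_n -> R -> R)
  (G : 'I_n -> 'I_n -> 'I_n -> R) (a b c dd : 'I_n) : R :=
  d a (G dd b c) - d b (G dd a c)
  - \sum_(k < n) G k a c * G dd b k + \sum_(k < n) G dd a k * G k b c.

Definition Ric (R : comNzRingType) (n : nat) (d : 'I_n -> R -> R)
  (G : 'I_n -> 'I_n -> 'I_n -> R) (a c : 'I_n) : R :=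
  \sum_(b < n) Riem d G a b c b.

Definition nabla31 (R : comNzRingType) (n : nat) (d : 'I_n -> R -> R)
  (G : 'I_n -> 'I_n -> 'I_n -> R) (T : 'I_n -> 'I_n -> 'I_n -> 'I_n -> R)
  (a b e c m : 'I_n) : R :=
  d a (T b e c m)
  - \sum_(k < n) (G k a b * T k e c m + G k a e * T b k c m + G k a c * T b e k m)
  + \sum_(k < n) G m a k * T b e c k.

Definition nabla03 (R : comNzRingType) (n : nat) (d : 'I_n -> R -> R)
  (G : 'I_n -> 'I_n -> 'I_n -> R) (S : 'I_n -> 'I_n -> 'I_n -> R)
  (a b e c : 'I_n) : R :=
  d a (S b e c)
  - \sum_(k < n) (G k a b * S k e c + G k a e * S b k c + G k a c * S b e k).

Definition divRiem (R : comNzRingType) (n : nat) (d : 'I_n -> R -> R)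
  (G : 'I_n -> 'I_n -> 'I_n -> R) (b e c : 'I_n) : R :=
  \sum_(m < n) nabla31 d G (Riem d G) m b e c m.

From HB Require Import structures.
From mathcomp Require Import all_boot all_order all_algebra.
Import GRing.Theory.
Local Open Scope ring_scope.

(* Once the covariant derivatives and the Riemann and Ricci tensors are
   expanded in coordinates, both sides of the identity are differential
   polynomials in the Christoffel symbols: sums over dummy indices of signed
   products of partial derivatives of the Γ^c_{ab}.  The identity then holds in
   any commutative ring with commuting derivations, using only additivity, the
   Leibniz rule, commutation of the ∂_i and the symmetry Γ^c_{ab} = Γ^c_{ba}. *)

Module DiffPoly.
Set Implicit Arguments. Unset Strict Implicit. Unset Printing Implicit Defensive.

(* An index is a dummy index (true, j), bound by the j-th enclosing summation,
   or a free index (false, j), the j-th of the free indices of the identity. *)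
Definition tensor_index := (bool * nat)%type.
Definition dummy (j : nat) : tensor_index := (true, j).
Definition free (j : nat) : tensor_index := (false, j).

(* The atom (ds, c, a, b) stands for ∂_{ds_1} ... ∂_{ds_p} Γ^c_{ab}. *)
Definition atom := (seq tensor_index * tensor_index * tensor_index * tensor_index)%type.

(* The monomial (k, s, l) stands for (-1)^s Σ_{t_1..t_k} Π_{x ∈ l} x, where
   the k new summation indices get the levels following those in scope. *)
Definition monomial := (nat * bool * seq atom)%type.

Inductive expr :=
| EChr of seq tensor_index & tensor_index & tensor_index & tensor_index
| EAdd of expr & expr
| ENeg of expr
| EMul of expr & expr
| ESum of expr
| EDer of tensor_index & expr.

(* Inserting k binders at level base shifts the dummy indices of level >= base. *)
Definition shift_index (base k : nat) (x : tensor_index) : tensor_index :=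
  if x.1 && (base <= x.2)%N then (true, (x.2 + k)%N) else x.
Definition shift_atom (base k : nat) (x : atom) : atom :=
  let: (ds, c, a, b) := x in
  (map (shift_index base k) ds, shift_index base k c,
   shift_index base k a, shift_index base k b).

Definition derive_atom (i : tensor_index) (x : atom) : atom :=
  let: (ds, c, a, b) := x in (i :: ds, c, a, b).

Fixpoint leibniz (i : tensor_index) (l : seq atom) : seq (seq atom) :=
  if l is x :: l' then (derive_atom i x :: l') :: [seq x :: l2 | l2 <- leibniz i l']
  else [::].

Definition negate_mono (m : monomial) : monomial :=
  let: (k, s, l) := m in (k, ~~ s, l).
Definition bind_mono (m : monomial) : monomial :=
  let: (k, s, l) := m in (k.+1, s, l).
Definition mul_mono (base : nat) (m1 m2 : monomial) : monomial :=
  let: (k1, s1, l1) := m1 in let: (k2, s2, l2) := m2 in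
  ((k1 + k2)%N, s1 (+) s2,
   map (shift_atom (base + k1) k2) l1 ++ map (shift_atom base k1) l2).
Definition derive_mono (base : nat) (i : tensor_index) (m : monomial) : seq monomial :=
  let: (k, s, l) := m in [seq (k, s, l2) | l2 <- leibniz (shift_index base k i) l].

(* Expansion of an expression with base dummy indices in scope. *)
Fixpoint normalize (base : nat) (e : expr) : seq monomial :=
  match e with
  | EChr ds c a b => [:: (0%N, false, [:: (ds, c, a, b)])]
  | EAdd e1 e2 => normalize base e1 ++ normalize base e2
  | ENeg e1 => map negate_mono (normalize base e1)
  | EMul e1 e2 =>
      [seq mul_mono base m1 m2 | m1 <- normalize base e1, m2 <- normalize base e2]
  | ESum e1 => map bind_mono (normalize base.+1 e1)
  | EDer i e1 => flatten [seq derive_mono base i m | m <- normalize base e1]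
  end.

Definition index_code (x : tensor_index) : nat := (x.2.*2 + x.1)%N.
Fixpoint lex_le (s t : seq nat) : bool :=
  match s, t with
  | [::], _ => true
  | _ :: _, [::] => false
  | x :: s', y :: t' => (x < y)%N || ((x == y) && lex_le s' t')
  end.
Definition atom_code (x : atom) : seq nat :=
  let: (ds, c, a, b) := x in
  size ds :: map index_code ds ++ [:: index_code c; index_code a; index_code b].
Definition index_le (x y : tensor_index) : bool := (index_code x <= index_code y)%N.
Definition atom_le (x y : atom) : bool := lex_le (atom_code x) (atom_code y).

Definition sort_atom (x : atom) : atom :=
  let: (ds, c, a, b) := x in
  let swap := (index_code b < index_code a)%N in
  (sort index_le ds, c, if swap then b else a, if swap then a else b).

Definition rename_index (k : nat) (q : seq nat) (x : tensor_index) : tensor_index :=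
  if x.1 && (x.2 < k)%N then (true, nth 0%N q x.2) else x.
Definition rename_atom (k : nat) (q : seq nat) (x : atom) : atom :=
  let: (ds, c, a, b) := x in
  (map (rename_index k q) ds, rename_index k q c,
   rename_index k q a, rename_index k q b).

Definition candidate (k : nat) (l : seq atom) (q : seq nat) : seq atom :=
  sort atom_le (map sort_atom (map (rename_atom k q) l)).
Definition pick_min (x0 : seq atom) (cs : seq (seq atom)) : seq atom :=
  foldl (fun acc c =>
    if lex_le (flatten (map atom_code c)) (flatten (map atom_code acc)) then c else acc)
    x0 cs.

Definition canonical (m : monomial) : monomial :=
  let: (k, s, l) := m in
  (k, s, pick_min (candidate k l (iota 0 k))
                  [seq candidate k l q | q <- permutations (iota 0 k)]).

Definition cancels (L : seq monomial) : bool :=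
  all (fun m => count_mem m L == count_mem (negate_mono m) L) L.

Lemma sum_cancel_involution (V : zmodType) (T : eqType) (f : T -> T) (v : T -> V) :
  involutive f -> (forall x, f x != x) -> (forall x, v (f x) = - v x) ->
  forall L, (forall x, count_mem x L = count_mem (f x) L) -> \sum_(x <- L) v x = 0.
Proof.
move=> ff fx vf L; elim: {L}(size L).+1 {-2}L (ltnSn (size L)) => // N IH [|x L] /= hs hc.
  by rewrite big_nil.
have hfx : f x \in L.
  have := hc x; rewrite /= eqxx eq_sym (negbTE (fx x)) add0n => H.
  by rewrite -has_pred1 has_count -H add1n.
have P : perm_eq (x :: L) (x :: f x :: rem (f x) L) by rewrite perm_cons perm_to_rem.
rewrite (perm_big _ P) !big_cons vf /= addNKr.
apply: IH; first by rewrite size_rem // (leq_ltn_trans (leq_pred _) _) // -ltnS.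
move=> y; have := hc y; rewrite !(permP (perm_to_rem hfx)) /=.
have -> : (x == f y) = (f x == y) by apply/eqP/eqP => [->|<-]; rewrite ff.
have -> : (f x == f y) = (x == y) by apply/eqP/eqP => [/(congr1 f)|->]; rewrite ?ff.
by rewrite addnCA => /eqP; rewrite !eqn_add2l => /eqP.
Qed.

Lemma foldr_perm_comm (A : eqType) (B : Type) (f : A -> B -> B) (y : B) :
  (forall i j z, f i (f j z) = f j (f i z)) ->
  forall l1 l2, perm_eq l1 l2 -> foldr f y l1 = foldr f y l2.
Proof.
move=> fC.
have mv l l' x : foldr f y (l ++ x :: l') = f x (foldr f y (l ++ l')).
  by elim: l => //= z l IH; rewrite IH fC.
elim=> [|x l1 IH] l2 /=; first by move=> /perm_size /= /esym/size0nil ->.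
move=> H; have Hx : x \in l2 by rewrite -(perm_mem H) mem_head.
case/splitPr: Hx H => l2a l2b H.
rewrite mv; congr (f x _); apply: IH.
rewrite -(perm_cons x); apply: perm_trans H _.
by apply/permPl; exact: (perm_catCA l2a [:: x] l2b).
Qed.

Section Semantics.
Variable R : comNzRingType.
Variable n : nat.
Variable d : 'I_n -> R -> R.
Hypothesis d_add : forall i x y, d i (x + y) = d i x + d i y.
Hypothesis d_mul : forall i x y, d i (x * y) = d i x * y + x * d i y.
Hypothesis d_comm : forall i j x, d i (d j x) = d j (d i x).
Variable G : 'I_n -> 'I_n -> 'I_n -> R.
Hypothesis G_sym : forall c a b, G c a b = G c b a.
(* free_idx lists the values of the free indices; i0 is a default value. *)
Variable i0 : 'I_n.
Variable free_idx : seq 'I_n.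

Lemma der0 i : d i 0 = 0.
Proof. by apply: (addrI (d i 0)); rewrite -d_add !addr0. Qed.

Lemma der1 i : d i 1 = 0.
Proof. by have := d_mul i 1 1; rewrite !mulr1 mul1r -[X in X = _]addr0 => /addrI. Qed.

Lemma derN i x : d i (- x) = - d i x.
Proof. by apply: (addrI (d i x)); rewrite -d_add !subrr der0. Qed.

Lemma der_sign i (s : bool) x : d i ((-1) ^+ s * x) = (-1) ^+ s * d i x.
Proof. by case: s; rewrite ?expr1 ?expr0 ?mulN1r ?mul1r // derN. Qed.

(* env lists the values of the dummy indices in scope, by level. *)
Definition eval_index (env : seq 'I_n) (x : tensor_index) : 'I_n :=
  if x.1 then nth i0 env x.2 else nth i0 free_idx x.2.
Definition eval_atom (env : seq 'I_n) (x : atom) : R :=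
  let: (ds, c, a, b) := x in
  foldr (fun i y => d (eval_index env i) y)
        (G (eval_index env c) (eval_index env a) (eval_index env b)) ds.

Fixpoint eval (env : seq 'I_n) (e : expr) : R :=
  match e with
  | EChr ds c a b => eval_atom env (ds, c, a, b)
  | EAdd e1 e2 => eval env e1 + eval env e2
  | ENeg e1 => - eval env e1
  | EMul e1 e2 => eval env e1 * eval env e2
  | ESum e1 => \sum_(j < n) eval (rcons env j) e1
  | EDer i e1 => d (eval_index env i) (eval env e1)
  end.

Definition tsum (k : nat) (F : seq 'I_n -> R) : R := \sum_(t : k.-tuple 'I_n) F t.

Definition eval_mono (env : seq 'I_n) (m : monomial) : R :=
  let: (k, s, l) := m in
  (-1) ^+ s * tsum k (fun t => \prod_(x <- l) eval_atom (env ++ t) x).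

Lemma tsum0 F : tsum 0 F = F [::].
Proof.
rewrite /tsum (big_pred1 [tuple]) // => t /=.
by apply/esym/eqP/val_inj; case: t => [[]].
Qed.

Lemma tsumS k F : tsum k.+1 F = \sum_(i < n) tsum k (fun t => F (i :: t)).
Proof.
rewrite /tsum (reindex (fun p : 'I_n * k.-tuple 'I_n => [tuple of p.1 :: p.2])) /=.
  by rewrite -(pair_bigA _ (fun i (t : k.-tuple 'I_n) => F (i :: t))).
exists (fun t : k.+1.-tuple 'I_n => (thead t, [tuple of behead t])).
  by move=> [i t] _ /=; congr (_, _); apply: val_inj.
by move=> t _; apply: val_inj => /=; rewrite [in RHS](tuple_eta t).
Qed.

Lemma tsumM k1 k2 F H :
  tsum k1 F * tsum k2 H = tsum (k1 + k2) (fun t => F (take k1 t) * H (drop k1 t)).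
Proof.
elim: k1 F => [|k1 IH] F.
  by rewrite tsum0 add0n /tsum mulr_sumr; apply: eq_bigr => t _; rewrite take0 drop0.
by rewrite addSn !tsumS mulr_suml; apply: eq_bigr => i _; rewrite IH.
Qed.

Lemma der_tsum i k F : d i (tsum k F) = tsum k (fun t => d i (F t)).
Proof. exact: (big_morph (d i) (d_add i) (der0 i)). Qed.

Lemma eval_index_shift pre mid post x :
  eval_index (pre ++ mid ++ post) (shift_index (size pre) (size mid) x) =
  eval_index (pre ++ post) x.
Proof.
case: x => [[] j] //=; rewrite /shift_index /eval_index /=.
case: leqP => hj /=; last by rewrite !nth_cat hj.
have h1 : (j + size mid < size pre)%N = false.
  by apply/negbTE; rewrite -leqNgt (leq_trans hj) ?leq_addr.
have h2 : (j < size pre)%N = false by apply/negbTE; rewrite -leqNgt.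
rewrite nth_cat h1 [RHS]nth_cat h2 -addnBAC // nth_cat ltnNge leq_addl /=.
by rewrite addnK.
Qed.

Lemma eval_atom_shift pre mid post x :
  eval_atom (pre ++ mid ++ post) (shift_atom (size pre) (size mid) x) =
  eval_atom (pre ++ post) x.
Proof.
case: x => [[[ds c] a] b] /=.
rewrite !eval_index_shift; elim: ds => [|i ds IH] //=.
by rewrite eval_index_shift IH.
Qed.

Lemma der_prod_atoms env i l :
  d (eval_index env i) (\prod_(x <- l) eval_atom env x) =
  \sum_(l2 <- leibniz i l) \prod_(x <- l2) eval_atom env x.
Proof.
elim: l => [|x l IH] /=; first by rewrite big_nil der1 big_nil.
rewrite big_cons d_mul IH big_cons big_cons big_map mulr_sumr; congr (_ + _).
  by case: x => [[[ds c] a] b].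
by apply: eq_bigr => l2 _; rewrite big_cons.
Qed.

Lemma eval_negate_mono env m : eval_mono env (negate_mono m) = - eval_mono env m.
Proof. by case: m => [[k s] l] /=; rewrite signrN mulNr. Qed.

Lemma eval_bind_mono env m :
  eval_mono env (bind_mono m) = \sum_(j < n) eval_mono (rcons env j) m.
Proof.
case: m => [[k s] l] /=; rewrite tsumS mulr_sumr; apply: eq_bigr => j _.
by congr (_ * _); apply: eq_bigr => t _; rewrite cat_rcons.
Qed.

Lemma eval_mul_mono env m1 m2 :
  eval_mono env (mul_mono (size env) m1 m2) = eval_mono env m1 * eval_mono env m2.
Proof.
case: m1 => [[k1 s1] l1]; case: m2 => [[k2 s2] l2] /=.
rewrite mulrACA -signr_addb tsumM; congr (_ * _); apply: eq_bigr => t _.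
have size_take1 : size (take k1 t) = k1 by rewrite size_takel // size_tuple leq_addr.
rewrite big_cat /= !big_map; congr (_ * _); apply: eq_bigr => x _.
  have -> : env ++ t = (env ++ take k1 t) ++ drop k1 t ++ [::].
    by rewrite cats0 -catA cat_take_drop.
  have := eval_atom_shift (env ++ take k1 t) (drop k1 t) [::] x.
  by rewrite size_cat size_take1 size_drop size_tuple addKn => ->; rewrite cats0.
have -> : env ++ t = env ++ take k1 t ++ drop k1 t by rewrite cat_take_drop.
by have := eval_atom_shift env (take k1 t) (drop k1 t) x; rewrite size_take1.
Qed.

Lemma eval_derive_mono env i m :
  d (eval_index env i) (eval_mono env m) =
  \sum_(m' <- derive_mono (size env) i m) eval_mono env m'.
Proof.
case: m => [[k s] l] /=; rewrite der_sign der_tsum big_map /tsum.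
have shift_i (t : k.-tuple 'I_n) :
    eval_index (env ++ t) (shift_index (size env) k i) = eval_index env i.
  by have := eval_index_shift env t [::] i; rewrite !cats0 size_tuple.
have der_term (t : k.-tuple 'I_n) :
    d (eval_index env i) (\prod_(x <- l) eval_atom (env ++ t) x) =
    \sum_(l2 <- leibniz (shift_index (size env) k i) l) \prod_(x <- l2) eval_atom (env ++ t) x.
  by rewrite -(shift_i t) der_prod_atoms.
by rewrite (eq_bigr _ (fun t _ => der_term t)) exchange_big mulr_sumr.
Qed.

Lemma normalize_sound e env :
  eval env e = \sum_(m <- normalize (size env) e) eval_mono env m.
Proof.
elim: e env => [ds c a b|e1 IH1 e2 IH2|e1 IH1|e1 IH1 e2 IH2|e1 IH1|i e1 IH1] env /=.
- by rewrite big_seq1 /= tsum0 cats0 big_seq1 expr0 mul1r.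
- by rewrite big_cat IH1 IH2.
- by rewrite IH1 big_map -sumrN; apply: eq_bigr => m _; rewrite eval_negate_mono.
- rewrite IH1 IH2 big_allpairs_dep mulr_suml; apply: eq_bigr => m1 _.
  by rewrite mulr_sumr; apply: eq_bigr => m2 _; rewrite eval_mul_mono.
- under eq_bigr => j _ do rewrite IH1 size_rcons.
  by rewrite big_map exchange_big; apply: eq_bigr => m _; rewrite eval_bind_mono.
- rewrite IH1 (big_morph (d (eval_index env i)) (d_add _) (der0 _)).
  by rewrite big_flatten big_map; apply: eq_bigr => m _; rewrite eval_derive_mono.
Qed.

(* Sorting an atom is justified by d_comm and G_sym. *)
Lemma eval_sort_atom env x : eval_atom env (sort_atom x) = eval_atom env x.
Proof.
case: x => [[[ds c] a] b] /=.
have sorted_perm : perm_eq (sort index_le ds) ds by rewrite perm_sort perm_refl.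
have der_comm i j y : d (eval_index env i) (d (eval_index env j) y) =
                      d (eval_index env j) (d (eval_index env i) y) by exact: d_comm.
rewrite (foldr_perm_comm _ der_comm sorted_perm).
by case: ifP => // _; rewrite G_sym.
Qed.

Definition permute_tuple (k : nat) (q : seq nat) (t : seq 'I_n) : seq 'I_n :=
  [seq nth i0 t (nth 0%N q j) | j <- iota 0 k].

Lemma nth_permute_tuple k q t j :
  nth i0 (permute_tuple k q t) j = if (j < k)%N then nth i0 t (nth 0%N q j) else i0.
Proof.
case: ltnP => hj; first by rewrite (nth_map 0%N) ?size_iota // nth_iota.
by rewrite nth_default // size_map size_iota.
Qed.

Lemma eval_rename_atom k q (t : seq 'I_n) x : size t = k ->
  eval_atom t (rename_atom k q x) = eval_atom (permute_tuple k q t) x.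
Proof.
move=> Ht.
have rename_ok y : eval_index t (rename_index k q y) =
                   eval_index (permute_tuple k q t) y.
  case: y => [[] j] //=; rewrite /rename_index /eval_index /= nth_permute_tuple.
  by case: ltnP => //= hj; rewrite nth_default // Ht.
case: x => [[[ds c] a] b] /=; rewrite !rename_ok.
by elim: ds => [|i ds IH] //=; rewrite rename_ok IH.
Qed.

Lemma size_permute_tuple k q t : size (permute_tuple k q t) == k.
Proof. by rewrite size_map size_iota. Qed.

Definition permute_tupleT k q (t : k.-tuple 'I_n) : k.-tuple 'I_n :=
  Tuple (size_permute_tuple k q t).

Lemma permute_tupleT_inj k q : perm_eq q (iota 0 k) -> injective (@permute_tupleT k q).
Proof.
move=> Hq t1 t2 /(congr1 val) /= E.
apply: val_inj; apply: (@eq_from_nth _ i0); first by rewrite !size_tuple.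
move=> j; rewrite size_tuple => hj.
have jq : j \in q by rewrite (perm_mem Hq) mem_iota.
have := congr1 (fun s => nth i0 s (index j q)) E; rewrite !nth_permute_tuple.
have -> : (index j q < k)%N by rewrite -(size_iota 0 k) -(perm_size Hq) index_mem.
by rewrite nth_index.
Qed.

Lemma candidate_sound k l q : q \in permutations (iota 0 k) ->
  tsum k (fun t => \prod_(x <- candidate k l q) eval_atom t x) =
  tsum k (fun t => \prod_(x <- l) eval_atom t x).
Proof.
rewrite mem_permutations => Hq.
rewrite /tsum [RHS](reindex_inj (permute_tupleT_inj Hq)); apply: eq_bigr => t _.
have sorted_perm : perm_eq (candidate k l q) (map sort_atom (map (rename_atom k q) l)).
  by rewrite perm_sort perm_refl.
rewrite (perm_big _ sorted_perm) !big_map; apply: eq_bigr => x _.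
by rewrite eval_sort_atom eval_rename_atom ?size_tuple.
Qed.

Lemma pick_min_ind (P : seq atom -> Prop) x0 cs :
  P x0 -> (forall c, c \in cs -> P c) -> P (pick_min x0 cs).
Proof.
rewrite /pick_min; elim: cs x0 => [|c cs IH] x0 //= H0 Hc.
apply: IH; last by move=> c' hc'; apply: Hc; rewrite in_cons hc' orbT.
by case: ifP => // _; apply: Hc; rewrite mem_head.
Qed.

Lemma canonical_sound m : eval_mono [::] (canonical m) = eval_mono [::] m.
Proof.
case: m => [[k s] l] /=; congr (_ * _).
apply: (pick_min_ind (P := fun c => tsum k (fun t => \prod_(x <- c) eval_atom t x) =
                                    tsum k (fun t => \prod_(x <- l) eval_atom t x))).
  by apply: candidate_sound; rewrite mem_permutations.
by move=> c /mapP [q Hq ->]; apply: candidate_sound.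
Qed.

Lemma cancels_sound e : cancels (map canonical (normalize 0 e)) -> eval [::] e = 0.
Proof.
move=> /allP H; rewrite normalize_sound.
have -> : \sum_(m <- normalize 0 e) eval_mono [::] m =
          \sum_(m <- map canonical (normalize 0 e)) eval_mono [::] m.
  by rewrite big_map; apply: eq_bigr => m _; rewrite canonical_sound.
set L := map canonical _ in H *.
have negateK : involutive negate_mono by case=> [[k s] l] /=; rewrite negbK.
apply: (sum_cancel_involution negateK) => [[[k s] l]|m|y].
- by apply/eqP => -[] /eqP; case: s.
- exact: eval_negate_mono.
case: (boolP (y \in L)) => hy; first by apply/eqP; apply: H.
case: (boolP (negate_mono y \in L)) => hny.
  by have := H _ hny; rewrite negateK => /eqP <-.
by rewrite (count_memPn hy) (count_memPn hny).
Qed.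

End Semantics.

(* Reified coordinate expressions of R_{abc}^d, R_{ac}, ∇_a R_{bec}^m,
   ∇_m R_{bec}^m and its covariant derivative; the argument L is the number of
   dummy indices in scope, so that dummy L is the next summation index. *)
Definition chr (c a b : tensor_index) : expr := EChr [::] c a b.
Definition ESub (x y : expr) : expr := EAdd x (ENeg y).

Definition riem_expr (L : nat) (a b c dd : tensor_index) : expr :=
  EAdd (ESub (ESub (EDer a (chr dd b c)) (EDer b (chr dd a c)))
             (ESum (EMul (chr (dummy L) a c) (chr dd b (dummy L)))))
       (ESum (EMul (chr dd a (dummy L)) (chr (dummy L) b c))).

Definition ric_expr (L : nat) (a c : tensor_index) : expr :=
  ESum (riem_expr L.+1 a (dummy L) c (dummy L)).

Definition nabla31_riem_expr (L : nat) (a b e c m : tensor_index) : expr :=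
  EAdd (ESub (EDer a (riem_expr L b e c m))
             (ESum (EAdd (EAdd (EMul (chr (dummy L) a b) (riem_expr L.+1 (dummy L) e c m))
                               (EMul (chr (dummy L) a e) (riem_expr L.+1 b (dummy L) c m)))
                         (EMul (chr (dummy L) a c) (riem_expr L.+1 b e (dummy L) m)))))
       (ESum (EMul (chr m a (dummy L)) (riem_expr L.+1 b e c (dummy L)))).

Definition div_riem_expr (L : nat) (b e c : tensor_index) : expr :=
  ESum (nabla31_riem_expr L.+1 (dummy L) b e c (dummy L)).

Definition nabla03_div_expr (L : nat) (a b e c : tensor_index) : expr :=
  ESub (EDer a (div_riem_expr L b e c))
       (ESum (EAdd (EAdd (EMul (chr (dummy L) a b) (div_riem_expr L.+1 (dummy L) e c))
                         (EMul (chr (dummy L) a e) (div_riem_expr L.+1 b (dummy L) c)))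
                   (EMul (chr (dummy L) a c) (div_riem_expr L.+1 b e (dummy L))))).

Definition fa : tensor_index := free 0.
Definition fb : tensor_index := free 1.
Definition fc : tensor_index := free 2.
Definition fe : tensor_index := free 3.

Definition identity_lhs : expr :=
  ESub (EAdd (ESub (nabla03_div_expr 0 fa fb fe fc) (nabla03_div_expr 0 fb fa fc fe))
             (nabla03_div_expr 0 fc fe fb fa))
       (nabla03_div_expr 0 fe fc fa fb).

Definition identity_rhs : expr :=
  ESum (ESub (EAdd (ESub (EMul (ric_expr 1 fa (dummy 0)) (riem_expr 1 fb fe fc (dummy 0)))
                         (EMul (ric_expr 1 fb (dummy 0)) (riem_expr 1 fa fc fe (dummy 0))))
                   (EMul (ric_expr 1 fc (dummy 0)) (riem_expr 1 fe fb fa (dummy 0))))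
             (EMul (ric_expr 1 fe (dummy 0)) (riem_expr 1 fc fa fb (dummy 0)))).

Definition identity_defect : expr := ESub identity_lhs identity_rhs.

Lemma identity_defect_cancels :
  cancels (map canonical (normalize 0 identity_defect)).
Proof. by vm_compute. Qed.

Lemma eval_identity_defect (R : comNzRingType) (n : nat) (d : 'I_n -> R -> R)
    (G : 'I_n -> 'I_n -> 'I_n -> R) (a b c e : 'I_n) :
  eval d G a [:: a; b; c; e] [::] identity_defect =
    (nabla03 d G (divRiem d G) a b e c - nabla03 d G (divRiem d G) b a c e
   + nabla03 d G (divRiem d G) c e b a - nabla03 d G (divRiem d G) e c a b)
  - \sum_(m < n) (Ric d G a m * Riem d G b e c m - Ric d G b m * Riem d G a c e m
                 + Ric d G c m * Riem d G e b a m - Ric d G e m * Riem d G c a b m).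
Proof. reflexivity. Qed.

End DiffPoly.

Theorem mainTheorem5 (R : comNzRingType) (n : nat)
  (d : 'I_n -> R -> R)
  (d_add : forall i x y, d i (x + y) = d i x + d i y)
  (d_mul : forall i x y, d i (x * y) = d i x * y + x * d i y)
  (d_comm : forall i j x, d i (d j x) = d j (d i x))
  (G : 'I_n -> 'I_n -> 'I_n -> R)
  (G_sym : forall c a b, G c a b = G c b a) :
  forall a b c e : 'I_n,
    nabla03 d G (divRiem d G) a b e c - nabla03 d G (divRiem d G) b a c e
  + nabla03 d G (divRiem d G) c e b a - nabla03 d G (divRiem d G) e c a b
  = \sum_(m < n) (Ric d G a m * Riem d G b e c m - Ric d G b m * Riem d G a c e m
                 + Ric d G c m * Riem d G e b a m - Ric d G e m * Riem d G c a b m).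
Proof.
move=> a b c e; apply/eqP; rewrite -subr_eq0; apply/eqP.
rewrite -DiffPoly.eval_identity_defect.
exact: (DiffPoly.cancels_sound d_add d_mul d_comm G_sym a [:: a; b; c; e]
          DiffPoly.identity_defect_cancels).
Qed.
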